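(* Let $n\ge2$, let $X_1,\dots,X_n$ be infinite dimensional Hilbert spaces and $D_k\in\mathcal{B}(X_k)$. Then for every $A\in\mathcal{B}_n$, $$\bigcup_{k=1}^n\sigma(D_k)=\sigma(T_n^d(A))\cup\Delta,$$ where $\Delta$ is the set of $\lambda\in\mathbb{C}$ such that either (a) there is $k\in\{2,\dots,n-1\}$ with $\big(\lambda\in\sigma_r(D_k)$ and $\beta(D_k-\lambda)\le\sum_{s=k+1}^n\alpha(D_s-\lambda)\big)$ or $\big(\lambda\in\sigma_l(D_k)$ and $\alpha(D_k-\lambda)\le\sum_{s=1}^{k-1}\beta(D_s-\lambda)\big)$; or (b) $0<\beta(D_1-\lambda)\le\sum_{s=2}^n\alpha(D_s-\lambda)$ or $0<\alpha(D_n-\lambda)\le\sum_{s=1}^{n-1}\beta(D_s-\lambda)$. In particular, if $\Delta=\emptyset$ then $\bigcup_{k=1}^n\sigma(D_k)=\sigma(T_n^d(A))$ for every $A\in\mathcal{B}_n$.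
   Context: For a bounded operator $T$, $\alpha(T)=\dim\mathcal{N}(T)$, $\beta(T)=\operatorname{codim}\mathcal{R}(T)$, values in $\{0,1,\dots\}\cup\{\infty\}$, sums and comparisons taken in this extended set. $T$ is left invertible if $\alpha(T)=0$ and $\mathcal{R}(T)$ is closed and complemented, right invertible if $\beta(T)=0$ and $\mathcal{N}(T)$ is complemented, invertible if both. $\sigma_l,\sigma_r,\sigma$ denote the sets of $\lambda\in\mathbb{C}$ with $\lambda-T$ not left invertible, not right invertible, not invertible. $\mathcal{B}_n$ is the set of tuples $A=(A_{ij})_{1\le i<j\le n}$, $A_{ij}\in\mathcal{B}(X_j,X_i)$; $T_n^d(A)$ is the upper triangular operator matrix on $X_1\oplus\cdots\oplus X_n$ with diagonal $D_1,\dots,D_n$, entries $A_{ij}$ above the diagonal and zeros below. *)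

From Stdlib Require Import Reals ClassicalEpsilon Arith.
From Coquelicot Require Import Coquelicot.

Open Scope R_scope.

(** Extended naturals {0,1,...} ∪ {∞}: None = ∞. *)
Definition enat := option nat.
Definition eadd (a b : enat) : enat :=
  match a, b with Some x, Some y => Some (x + y)%nat | _, _ => None end.
Definition ele (a b : enat) : Prop :=
  match a, b with
  | _, None => True
  | None, Some _ => False
  | Some x, Some y => (x <= y)%nat
  end.
(* sum_{s=a}^{b} f s in the extended naturals (0 if b < a) *)
Fixpoint esum_len (f : nat -> enat) (a len : nat) : enat :=
  match len with
  | O => Some 0%nat
  | S l => eadd (f a) (esum_len f (S a) l)
  end.
Definition esum (f : nat -> enat) (a b : nat) : enat := esum_len f a (S b - a).

(** Sum in an abelian group over j = a .. b (zero if b < a). *)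
Fixpoint gsum_len {G : AbelianMonoid} (f : nat -> G) (a len : nat) : G :=
  match len with
  | O => zero
  | S l => plus (f a) (gsum_len f (S a) l)
  end.
Definition gsum {G : AbelianMonoid} (f : nat -> G) (a b : nat) : G :=
  gsum_len f a (S b - a).

(** A complex vector space together with its (norm) topology, given through
    sequential convergence (enough to speak of closed subspaces). *)
Record VSp := {
  car :> Type;
  vzero : car;
  vadd : car -> car -> car;
  vopp : car -> car;
  vscal : C -> car -> car;
  vcv : (nat -> car) -> car -> Prop   (* u_m --> x *)
}.

Section VSpTheory.
Variable V : VSp.

Fixpoint vlin (c : nat -> C) (v : nat -> V) (m : nat) : V :=
  match m with
  | O => vzero V
  | S k => vadd V (vlin c v k) (vscal V (c k) (v k))
  end.

Definition subspace (S : V -> Prop) : Prop :=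
  S (vzero V) /\ (forall x y, S x -> S y -> S (vadd V x y)) /\
  (forall a x, S x -> S (vscal V a x)).

Definition closed_set (S : V -> Prop) : Prop :=
  forall (u : nat -> V) (x : V), (forall m, S (u m)) -> vcv V u x -> S x.

(* v_0,...,v_{m-1} lie in S and are linearly independent modulo W *)
Definition indep_mod (S W : V -> Prop) (v : nat -> V) (m : nat) : Prop :=
  (forall i, (i < m)%nat -> S (v i)) /\
  (forall c : nat -> C, W (vlin c v m) -> forall i, (i < m)%nat -> c i = 0%C).

Definition dim_bound (S W : V -> Prop) (d : nat) : Prop :=
  forall v m, indep_mod S W v m -> (m <= d)%nat.

(* dimension of S modulo W, in {0,1,...} ∪ {∞} *)
Definition dim_mod (S W : V -> Prop) : enat :=
  match excluded_middle_informative (exists d, dim_bound S W d) with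
  | left _ => Some (epsilon (inhabits 0%nat)
                      (fun d => dim_bound S W d /\
                                forall d', dim_bound S W d' -> (d <= d')%nat))
  | right _ => None
  end.

Definition zero_sub (x : V) : Prop := x = vzero V.
Definition full_sub (x : V) : Prop := True.

Definition complemented (S : V -> Prop) : Prop :=
  exists M : V -> Prop, subspace M /\ closed_set M /\
    (forall x, S x -> M x -> x = vzero V) /\
    (forall x, exists s m, S s /\ M m /\ x = vadd V s m).
End VSpTheory.

Section Ops.
Variable V : VSp.
Variable T : V -> V.
Definition kernel (x : V) : Prop := T x = vzero V.
Definition range (y : V) : Prop := exists x, T x = y.
(* α(T) = dim N(T), β(T) = codim R(T) *)
Definition alpha : enat := dim_mod V (kernel) (zero_sub V).
Definition beta : enat := dim_mod V (full_sub V) (range).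
Definition left_invertible : Prop :=
  alpha = Some 0%nat /\ closed_set V range /\ complemented V range.
Definition right_invertible : Prop :=
  beta = Some 0%nat /\ complemented V kernel.
Definition invertible : Prop := left_invertible /\ right_invertible.
End Ops.

Definition shift (V : VSp) (T : V -> V) (l : C) : V -> V :=
  fun x => vadd V (T x) (vopp V (vscal V l x)).
(* σ_l, σ_r, σ : λ - T not left/right invertible / invertible
   (λ - T and T - λ differ by a sign, which does not affect these notions;
    we use λ - T as in the paper's definition) *)
Definition lshift (V : VSp) (T : V -> V) (l : C) : V -> V :=
  fun x => vadd V (vscal V l x) (vopp V (T x)).
Definition spec_l (V : VSp) (T : V -> V) (l : C) : Prop :=
  ~ left_invertible V (lshift V T l).
Definition spec_r (V : VSp) (T : V -> V) (l : C) : Prop :=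
  ~ right_invertible V (lshift V T l).
Definition spec (V : VSp) (T : V -> V) (l : C) : Prop :=
  ~ invertible V (lshift V T l).

Definition VSp_of (X : CompleteNormedModule C_AbsRing) : VSp := {|
  car := X; vzero := zero; vadd := plus; vopp := opp; vscal := scal;
  vcv := fun u x => forall eps : R, 0 < eps ->
           exists N, forall m, (N <= m)%nat -> norm (minus (u m) x) < eps |}.

Definition is_hilbert (X : CompleteNormedModule C_AbsRing) : Prop :=
  exists ip : X -> X -> C,
    (forall x y z, ip (plus x y) z = (ip x z + ip y z)%C) /\
    (forall (a : C) x z, ip (scal a x) z = (a * ip x z)%C) /\
    (forall x y, ip y x = Cconj (ip x y)) /\
    (forall x, 0 <= Re (ip x x)) /\
    (forall x, ip x x = 0%C -> x = zero) /\
    (forall x, norm x = sqrt (Re (ip x x))).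

Definition inf_dim (X : CompleteNormedModule C_AbsRing) : Prop :=
  dim_mod (VSp_of X) (full_sub (VSp_of X)) (zero_sub (VSp_of X)) = None.

(** Direct sum X_1 ⊕ ... ⊕ X_n, indices 1..n, with the product topology
    (equal to the norm topology of the direct sum since n is finite). *)
Section DirectSum.
Variable n : nat.
Variable X : nat -> CompleteNormedModule C_AbsRing.

Definition Idx := {i : nat | (1 <= i <= n)%nat}.
Definition DS := forall i : Idx, X (proj1_sig i).

Definition DS_space : VSp := {|
  car := DS;
  vzero := fun i => zero;
  vadd := fun p q i => plus (p i) (q i);
  vopp := fun p i => opp (p i);
  vscal := fun a p i => scal a (p i);
  vcv := fun u p => forall i : Idx, vcv (VSp_of (X (proj1_sig i)))
                                     (fun m => u m i) (p i) |}.

(* component j of p (zero outside 1..n) *)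
Definition comp (p : DS) (j : nat) : X j :=
  match le_dec 1 j, le_dec j n with
  | left H1, left H2 => p (exist _ j (conj H1 H2))
  | _, _ => zero
  end.

(* T_n^d(A): (T p)_i = D_i p_i + sum_{j=i+1}^n A_ij p_j *)
Definition Tmat (D : forall k, X k -> X k) (A : forall i j, X j -> X i)
  (p : DS) : DS :=
  fun i => plus (D (proj1_sig i) (p i))
                (gsum (fun j => A (proj1_sig i) j (comp p j))
                      (S (proj1_sig i)) n).
End DirectSum.

Definition alphaD (X : nat -> CompleteNormedModule C_AbsRing)
  (D : forall k, X k -> X k) (l : C) (k : nat) : enat :=
  alpha (VSp_of (X k)) (shift (VSp_of (X k)) (D k) l).
Definition betaD (X : nat -> CompleteNormedModule C_AbsRing)
  (D : forall k, X k -> X k) (l : C) (k : nat) : enat :=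
  beta (VSp_of (X k)) (shift (VSp_of (X k)) (D k) l).

Definition Delta_exc (n : nat) (X : nat -> CompleteNormedModule C_AbsRing)
  (D : forall k, X k -> X k) (l : C) : Prop :=
  (exists k, (2 <= k <= n - 1)%nat /\
     ((spec_r (VSp_of (X k)) (D k) l /\
         ele (betaD X D l k) (esum (alphaD X D l) (S k) n)) \/
      (spec_l (VSp_of (X k)) (D k) l /\
         ele (alphaD X D l k) (esum (betaD X D l) 1 (k - 1)))))
  \/
  ((betaD X D l 1 <> Some 0%nat /\
      ele (betaD X D l 1) (esum (alphaD X D l) 2 n)) \/
   (alphaD X D l n <> Some 0%nat /\
      ele (alphaD X D l n) (esum (betaD X D l) 1 (n - 1)))).

From Pilot Require Import Defs.
From Stdlib Require Import Reals ClassicalEpsilon Arith Lia Lra Classical Wf_nat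
  FunctionalExtensionality PropExtensionality ProofIrrelevance.
From Coquelicot Require Import Coquelicot.

(* With the notions of invertibility used here, a bounded operator is invertible exactly when
   it is bijective. Write T = λ - T_n^d(A); it is upper triangular with diagonal entries
   E_k = λ - D_k, so if every E_k is bijective, back substitution inverts T. Conversely
   suppose T is bijective but some E_k is not.
   - If E_k is not onto, then k < n, and solving T p = (0,...,0,y,0,...,0) embeds a complement
     of R(E_k) into the space of p supported on {k+1,...,n} with T p supported on {1,...,k};
     peeling off one coordinate at a time bounds its dimension by Σ_{s>k} α(E_s).
   - If E_k is onto but not one-to-one, then k > 1, and injectivity of T embeds N(E_k) into a
     complement of the vectors whose first k-1 coordinates are those of T p for some p
     supported on {1,...,k-1}; this space has codimension at most Σ_{s<k} β(E_s).
   Both estimates rest on dim(M/W) <= dim(M/U) + dim((M ∩ U)/W) for W ⊆ U. *)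

Lemma ele_trans a b c : ele a b -> ele b c -> ele a c.
Proof. destruct a, b, c; simpl; intros; auto; try lia; contradiction. Qed.

Lemma eadd_comm a b : eadd a b = eadd b a.
Proof. destruct a, b; simpl; auto. f_equal; lia. Qed.

Lemma eadd_assoc a b c : eadd a (eadd b c) = eadd (eadd a b) c.
Proof. destruct a, b, c; simpl; auto. f_equal; lia. Qed.

Lemma eadd_le_compat a b a' b' : ele a a' -> ele b b' -> ele (eadd a b) (eadd a' b').
Proof. destruct a, b, a', b'; simpl; intros; auto; try lia; contradiction. Qed.

Lemma esum_empty f b : esum f (S b) b = Some 0%nat.
Proof. unfold esum. rewrite Nat.sub_diag. reflexivity. Qed.

Lemma esum_cons f a b : (a <= b)%nat -> esum f a b = eadd (f a) (esum f (S a) b).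
Proof. intro H. unfold esum. replace (S b - a)%nat with (S (S b - S a)) by lia. reflexivity. Qed.

Lemma esum_len_snoc f a len : esum_len f a (S len) = eadd (esum_len f a len) (f (a + len)%nat).
Proof.
  revert a. induction len as [|len IH]; intro a.
  - simpl. rewrite Nat.add_0_r. destruct (f a); simpl; auto. f_equal; lia.
  - change (esum_len f a (S (S len))) with (eadd (f a) (esum_len f (S a) (S len))).
    rewrite IH, eadd_assoc. do 2 f_equal. lia.
Qed.

Lemma esum_snoc f a b : (a <= S b)%nat -> esum f a (S b) = eadd (esum f a b) (f (S b)).
Proof.
  intro H. unfold esum. replace (S (S b) - a)%nat with (S (S b - a)) by lia.
  rewrite esum_len_snoc. do 2 f_equal. lia.
Qed.

Lemma esum_len_ext f g a len : (forall i, (a <= i < a + len)%nat -> f i = g i) ->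
  esum_len f a len = esum_len g a len.
Proof.
  revert a. induction len as [|len IH]; intros a H; simpl; auto.
  rewrite (H a) by lia. rewrite IH; auto. intros; apply H; lia.
Qed.

Lemma esum_ext f g a b : (forall i, (a <= i <= b)%nat -> f i = g i) -> esum f a b = esum g a b.
Proof. intro H. apply esum_len_ext. intros; apply H; lia. Qed.

Definition snoc {T : Type} (v : nat -> T) (m : nat) (z : T) : nat -> T :=
  fun i => if Nat.ltb i m then v i else z.

Lemma snoc_lt {T : Type} (v : nat -> T) m z i : (i < m)%nat -> snoc v m z i = v i.
Proof. intro Hi. unfold snoc. destruct (Nat.ltb_spec i m); auto; lia. Qed.

Lemma snoc_last {T : Type} (v : nat -> T) m z : snoc v m z m = z.
Proof. unfold snoc. rewrite Nat.ltb_irrefl. reflexivity. Qed.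

Lemma choice_below {T : Type} (t0 : T) (P : nat -> T -> Prop) m :
  (forall i, (i < m)%nat -> exists y, P i y) ->
  exists f : nat -> T, forall i, (i < m)%nat -> P i (f i).
Proof.
  intro H. destruct (ClassicalEpsilon.choice (fun i y => (i < m)%nat -> P i y)) as [f Hf]; eauto.
  intro i. destruct (classic (i < m)%nat) as [Hi|Hi]; [destruct (H i Hi) as [y Hy]|]; eauto.
  exists t0. contradiction.
Qed.

Class vspace_laws (V : VSp) : Prop := {
  vadd_assoc : forall x y z, vadd V x (vadd V y z) = vadd V (vadd V x y) z;
  vadd_comm : forall x y, vadd V x y = vadd V y x;
  vadd_0_r : forall x, vadd V x (vzero V) = x;
  vadd_opp_r : forall x, vadd V x (vopp V x) = vzero V;
  vscal_assoc : forall a b x, vscal V a (vscal V b x) = vscal V (Cmult a b) x;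
  vscal_1 : forall x, vscal V (RtoC 1) x = x;
  vscal_distr_l : forall a x y, vscal V a (vadd V x y) = vadd V (vscal V a x) (vscal V a y);
  vscal_distr_r : forall a b x, vscal V (Cplus a b) x = vadd V (vscal V a x) (vscal V b x)
}.

#[export] Instance VSp_of_laws (X : CompleteNormedModule C_AbsRing) : vspace_laws (VSp_of X).
Proof.
  constructor; simpl; intros.
  - apply plus_assoc.
  - apply plus_comm.
  - apply plus_zero_r.
  - exact (@plus_opp_r (CompleteNormedModule.AbelianGroup C_AbsRing X) x).
  - exact (@scal_assoc C_AbsRing _ a b _).
  - exact (@scal_one C_AbsRing _ _).
  - exact (@scal_distr_l C_AbsRing _ a _ _).
  - exact (@scal_distr_r C_AbsRing _ a b _).
Qed.

#[export] Instance DS_space_laws n X : vspace_laws (DS_space n X).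
Proof.
  constructor; simpl; intros; apply functional_extensionality_dep; intro i.
  - apply plus_assoc.
  - apply plus_comm.
  - apply plus_zero_r.
  - exact (@plus_opp_r (CompleteNormedModule.AbelianGroup C_AbsRing _) (x i)).
  - exact (@scal_assoc C_AbsRing _ a b _).
  - exact (@scal_one C_AbsRing _ _).
  - exact (@scal_distr_l C_AbsRing _ a _ _).
  - exact (@scal_distr_r C_AbsRing _ a b _).
Qed.

Section VSpaceTheory.
Context {V : VSp} {HV : vspace_laws V}.

Lemma vadd_0_l x : vadd V (vzero V) x = x.
Proof. rewrite vadd_comm. apply vadd_0_r. Qed.

Lemma vadd_cancel_l x y z : vadd V x y = vadd V x z -> y = z.
Proof.
  intro H.
  rewrite <- (vadd_0_l y), <- (vadd_0_l z), <- (vadd_opp_r x), (vadd_comm x).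
  rewrite <- !vadd_assoc, H. reflexivity.
Qed.

Lemma vscal_0_l x : vscal V (RtoC 0) x = vzero V.
Proof.
  apply (vadd_cancel_l (vscal V (RtoC 0) x)).
  rewrite <- vscal_distr_r, vadd_0_r. f_equal. apply injective_projections; simpl; ring.
Qed.

Lemma vscal_0_r a : vscal V a (vzero V) = vzero V.
Proof.
  apply (vadd_cancel_l (vscal V a (vzero V))).
  rewrite <- vscal_distr_l, !vadd_0_r. reflexivity.
Qed.

Lemma vopp_scal x : vopp V x = vscal V (Copp (RtoC 1)) x.
Proof.
  apply (vadd_cancel_l x). rewrite vadd_opp_r.
  rewrite <- (vscal_1 x) at 1. rewrite <- vscal_distr_r, <- (vscal_0_l x).
  f_equal. apply injective_projections; simpl; ring.
Qed.

Lemma vscal_eq_0 a x : a <> RtoC 0 -> vscal V a x = vzero V -> x = vzero V.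
Proof.
  intros Ha H. rewrite <- (vscal_1 x).
  replace (RtoC 1) with (Cmult (Cinv a) a) by (field; auto).
  rewrite <- vscal_assoc, H. apply vscal_0_r.
Qed.

Lemma vadd_add_swap x y z w :
  vadd V (vadd V x y) (vadd V z w) = vadd V (vadd V x z) (vadd V y w).
Proof.
  rewrite !vadd_assoc. f_equal. rewrite <- !vadd_assoc. f_equal. apply vadd_comm.
Qed.

Lemma vadd_scal_opp_cancel x s z : vadd V (vadd V x (vscal V s z)) (vscal V (Copp s) z) = x.
Proof.
  rewrite <- vadd_assoc, <- vscal_distr_r.
  replace (Cplus s (Copp s)) with (RtoC 0) by (apply injective_projections; simpl; ring).
  rewrite vscal_0_l. apply vadd_0_r.
Qed.

Lemma vadd_opp_scal_cancel x z : vadd V (vadd V x (vscal V (Copp (RtoC 1)) z)) z = x.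
Proof.
  rewrite <- vadd_assoc. rewrite <- (vscal_1 z) at 2. rewrite <- vscal_distr_r.
  replace (Cplus (Copp (RtoC 1)) (RtoC 1)) with (RtoC 0)
    by (apply injective_projections; simpl; ring).
  rewrite vscal_0_l. apply vadd_0_r.
Qed.

Lemma vlin_ext c d v w m : (forall i, (i < m)%nat -> c i = d i /\ v i = w i) ->
  vlin V c v m = vlin V d w m.
Proof.
  induction m as [|m IH]; intro H; simpl; auto.
  destruct (H m) as [-> ->]; auto. rewrite IH; auto.
Qed.

Lemma vlin_0_coef c v m : (forall i, (i < m)%nat -> c i = RtoC 0) -> vlin V c v m = vzero V.
Proof.
  induction m as [|m IH]; intro H; simpl; auto.
  rewrite IH, H, vscal_0_l by auto. apply vadd_0_r.
Qed.

Lemma vlin_vadd c u w m :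
  vlin V c (fun i => vadd V (u i) (w i)) m = vadd V (vlin V c u m) (vlin V c w m).
Proof.
  induction m as [|m IH]; simpl.
  - symmetry. apply vadd_0_r.
  - rewrite IH, vscal_distr_l. apply vadd_add_swap.
Qed.

Lemma vlin_vscal c a u m :
  vlin V c (fun i => vscal V a (u i)) m = vscal V a (vlin V c u m).
Proof.
  induction m as [|m IH]; simpl.
  - symmetry. apply vscal_0_r.
  - rewrite IH, vscal_distr_l, !vscal_assoc. do 2 f_equal.
    apply injective_projections; simpl; ring.
Qed.

Fixpoint csum (c t : nat -> C) (m : nat) : C :=
  match m with O => RtoC 0 | S k => Cplus (csum c t k) (Cmult (c k) (t k)) end.

Lemma vlin_add_line c u t z m :
  vlin V c (fun i => vadd V (u i) (vscal V (t i) z)) m =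
  vadd V (vlin V c u m) (vscal V (csum c t m) z).
Proof.
  induction m as [|m IH]; simpl.
  - rewrite vscal_0_l. symmetry. apply vadd_0_r.
  - rewrite IH, vscal_distr_l, vscal_assoc, vadd_add_swap, vscal_distr_r. reflexivity.
Qed.

Lemma vlin_snoc c v m z :
  vlin V c (snoc v m z) (S m) = vadd V (vlin V c v m) (vscal V (c m) z).
Proof.
  simpl. rewrite snoc_last. f_equal.
  apply vlin_ext. intros i Hi. rewrite snoc_lt; auto.
Qed.

Lemma vlin_snoc_coef c a v m :
  vlin V (snoc c m a) v (S m) = vadd V (vlin V c v m) (vscal V a (v m)).
Proof.
  simpl. rewrite snoc_last. f_equal.
  apply vlin_ext. intros i Hi. rewrite snoc_lt; auto.
Qed.

Lemma subspace_vlin S c v m : subspace V S -> (forall i, (i < m)%nat -> S (v i)) ->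
  S (vlin V c v m).
Proof.
  intros [H0 [Hadd Hscal]] Hv. induction m as [|m IH]; simpl; auto.
  apply Hadd; auto.
Qed.

Lemma subspace_inter S1 S2 : subspace V S1 -> subspace V S2 ->
  subspace V (fun x => S1 x /\ S2 x).
Proof.
  intros [? [? ?]] [? [? ?]]. split; [|split]; [split; auto| |].
  - intros x y [] []; split; auto.
  - intros a x []; split; auto.
Qed.

Lemma subspace_full : subspace V (full_sub V).
Proof. split; [|split]; constructor. Qed.

Lemma subspace_zero : subspace V (zero_sub V).
Proof.
  unfold zero_sub. split; [|split]; auto.
  - intros x y -> ->. apply vadd_0_r.
  - intros a x ->. apply vscal_0_r.
Qed.

Lemma subspace_scal_out W z a : subspace V W -> ~ W z -> W (vscal V a z) -> a = RtoC 0.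
Proof.
  intros [_ [_ Hscal]] Hz Ha. apply NNPP; intro Hn. apply Hz.
  rewrite <- (vscal_1 z). replace (RtoC 1) with (Cmult (Cinv a) a) by (field; auto).
  rewrite <- vscal_assoc. auto.
Qed.

End VSpaceTheory.

Definition vlinear (V W : VSp) (f : V -> W) : Prop :=
  (forall x y, f (vadd V x y) = vadd W (f x) (f y)) /\
  (forall a x, f (vscal V a x) = vscal W a (f x)).

Lemma vlinear_comp (U V W : VSp) (f : U -> V) (g : V -> W) :
  vlinear U V f -> vlinear V W g -> vlinear U W (fun x => g (f x)).
Proof. intros [f1 f2] [g1 g2]. split; intros; [rewrite f1, g1|rewrite f2, g2]; auto. Qed.

Section LinearMaps.
Context {V W : VSp}.
Variable f : V -> W.
Hypothesis Hf : vlinear V W f.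
Context {HV : vspace_laws V} {HW : vspace_laws W}.

Lemma vlinear_0 : f (vzero V) = vzero W.
Proof.
  rewrite <- (vscal_0_l (vzero V)), (proj2 Hf). apply vscal_0_l.
Qed.

Lemma vlinear_vlin c v m : f (vlin V c v m) = vlin W c (fun i => f (v i)) m.
Proof.
  induction m as [|m IH]; simpl.
  - apply vlinear_0.
  - rewrite (proj1 Hf), (proj2 Hf), IH. reflexivity.
Qed.

Lemma subspace_preimage S : subspace W S -> subspace V (fun x => S (f x)).
Proof.
  intros [H0 [Hadd Hscal]]. split; [|split].
  - rewrite vlinear_0. exact H0.
  - intros x y Hx Hy. rewrite (proj1 Hf). auto.
  - intros a x Hx. rewrite (proj2 Hf). auto.
Qed.

Lemma vlinear_inj : (forall x, f x = vzero W -> x = vzero V) -> forall x y, f x = f y -> x = y.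
Proof.
  intros Hker x y Exy.
  assert (H0 : vadd V x (vscal V (Copp (RtoC 1)) y) = vzero V).
  { apply Hker. rewrite (proj1 Hf), (proj2 Hf), Exy, <- vopp_scal. apply vadd_opp_r. }
  rewrite <- (vadd_opp_scal_cancel x y), H0. apply vadd_0_l.
Qed.

End LinearMaps.

Section Dimension.
Variable V : VSp.

Lemma dim_mod_Some S W d : dim_mod V S W = Some d ->
  dim_bound V S W d /\ forall d', dim_bound V S W d' -> (d <= d')%nat.
Proof.
  unfold dim_mod. destruct (excluded_middle_informative _) as [Hex|]; [|discriminate].
  intro E. injection E as <-. apply epsilon_spec.
  destruct (dec_inh_nat_subset_has_unique_least_element (dim_bound V S W)) as [d [Hd _]];
    eauto using classic.
Qed.

Lemma dim_mod_le_bound S W d : dim_bound V S W d -> ele (dim_mod V S W) (Some d).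
Proof.
  intro Hd. destruct (dim_mod V S W) as [d0|] eqn:E; simpl.
  - exact (proj2 (dim_mod_Some S W d0 E) d Hd).
  - unfold dim_mod in E. destruct (excluded_middle_informative _) as [|Hno]; [discriminate|].
    apply Hno. eauto.
Qed.

Lemma dim_mod_0 {HV : vspace_laws V} S W : subspace V S -> (forall x, S x -> W x) ->
  dim_mod V S W = Some 0%nat.
Proof.
  intros HS HSW.
  assert (Hb : dim_bound V S W 0).
  { intros v [|m] [Hv Hind]; auto. exfalso.
    assert (E : RtoC 1 = RtoC 0).
    { apply (Hind (fun _ => RtoC 1)) with (i := 0%nat); [|lia]. apply HSW, subspace_vlin; auto. }
    injection E; lra. }
  assert (H := dim_mod_le_bound S W 0 Hb).
  destruct (dim_mod V S W) as [d|]; simpl in H; [f_equal; lia|contradiction].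
Qed.

Lemma dim_mod_0_incl {HV : vspace_laws V} S W x : dim_mod V S W = Some 0%nat ->
  (forall a y, W y -> W (vscal V a y)) -> S x -> W x.
Proof.
  intros E HW Sx. apply NNPP; intro Wx.
  enough (1 <= 0)%nat by lia.
  apply (proj1 (dim_mod_Some S W 0 E) (fun _ => x) 1%nat). split; auto.
  intros c Hc i Hi. replace i with 0%nat by lia. simpl in Hc. rewrite vadd_0_l in Hc.
  apply NNPP; intro Hc0. apply Wx.
  rewrite <- (vscal_1 x). replace (RtoC 1) with (Cmult (Cinv (c 0%nat)) (c 0%nat)) by (field; auto).
  rewrite <- vscal_assoc. auto.
Qed.

End Dimension.

Lemma dim_mod_le_transfer (V V' : VSp) S W S' W' :
  (forall v m, indep_mod V S W v m -> exists v', indep_mod V' S' W' v' m) ->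
  ele (dim_mod V S W) (dim_mod V' S' W').
Proof.
  intro H. destruct (dim_mod V' S' W') as [d'|] eqn:E'; [|destruct (dim_mod V S W); exact I].
  apply dim_mod_le_bound. intros v m Hv.
  destruct (H v m Hv) as [v' Hv']. exact (proj1 (dim_mod_Some V' S' W' d' E') v' m Hv').
Qed.

Section Subadditivity.
Context {V : VSp} {HV : vspace_laws V}.

Definition add_line (W : V -> Prop) (z : V) : V -> Prop :=
  fun x => exists w t, W w /\ x = vadd V w (vscal V t z).

Lemma subspace_add_line W z : subspace V W -> subspace V (add_line W z).
Proof.
  intros [H0 [Hadd Hscal]]. split; [|split].
  - exists (vzero V), (RtoC 0). rewrite vscal_0_l, vadd_0_r. auto.
  - intros x y [w1 [t1 [Hw1 ->]]] [w2 [t2 [Hw2 ->]]].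
    exists (vadd V w1 w2), (Cplus t1 t2). rewrite vadd_add_swap, vscal_distr_r. auto.
  - intros a x [w [t [Hw ->]]]. exists (vscal V a w), (Cmult a t).
    rewrite vscal_distr_l, vscal_assoc. auto.
Qed.

Lemma indep_mod_snoc M W v m z : subspace V W -> M z -> ~ W z ->
  indep_mod V M (add_line W z) v m -> indep_mod V M W (snoc v m z) (S m).
Proof.
  intros HW Mz Wz [Hv Hind]. split.
  - intros i Hi. unfold snoc. destruct (Nat.ltb_spec i m); auto.
  - intros c Hc. rewrite vlin_snoc in Hc.
    assert (Hc0 : forall i, (i < m)%nat -> c i = RtoC 0).
    { apply Hind. exists (vadd V (vlin V c v m) (vscal V (c m) z)), (Copp (c m)).
      rewrite vadd_scal_opp_cancel. auto. }
    rewrite (vlin_0_coef c v m Hc0), vadd_0_l in Hc.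
    intros i Hi. destruct (Nat.eq_dec i m) as [->|]; [|apply Hc0; lia].
    exact (subspace_scal_out W z (c m) HW Wz Hc).
Qed.

Lemma indep_mod_last M W v m : indep_mod V M W v (S m) ->
  M (v m) /\ ~ W (v m) /\ indep_mod V M (add_line W (v m)) v m.
Proof.
  intros [Hv Hind]. split; [|split].
  - apply Hv. lia.
  - intro Hw.
    assert (E : RtoC 1 = RtoC 0).
    { rewrite <- (snoc_last (fun _ => RtoC 0) m (RtoC 1)). apply Hind; [|lia].
      rewrite vlin_snoc_coef, vlin_0_coef, vadd_0_l, vscal_1; auto. }
    injection E; lra.
  - split; [intros i Hi; apply Hv; lia|].
    intros c [w [t [Hw Hc]]] i Hi.
    rewrite <- (snoc_lt c m (Copp t) i Hi). apply Hind; [|lia].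
    rewrite vlin_snoc_coef, Hc, vadd_scal_opp_cancel. exact Hw.
Qed.

Lemma dim_bound_add_line M W z d : subspace V W -> M z -> ~ W z -> dim_bound V M W d ->
  (1 <= d)%nat /\ dim_bound V M (add_line W z) (d - 1).
Proof.
  intros HW Mz Wz Hd. split.
  - apply (Hd (fun _ => z)). split; [auto|].
    intros c Hc i Hi. replace i with 0%nat by lia. simpl in Hc. rewrite vadd_0_l in Hc.
    exact (subspace_scal_out W z _ HW Wz Hc).
  - intros v m Hv. enough (S m <= d)%nat by lia.
    apply (Hd (snoc v m z)). apply indep_mod_snoc; auto.
Qed.

Lemma dim_bound_inter_add_line M U W z b : subspace V M -> M z ->
  dim_bound V (fun x => M x /\ U x) W b ->
  dim_bound V (fun x => M x /\ add_line U z x) (add_line W z) b.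
Proof.
  intros [_ [Madd Mscal]] Mz Hb x m [Hx Hind].
  destruct (choice_below (vzero V, RtoC 0)
              (fun i p => U (fst p) /\ x i = vadd V (fst p) (vscal V (snd p) z)) m)
    as [f Hf].
  { intros i Hi. destruct (proj2 (Hx i Hi)) as [u [t [Hu Ex]]]. exists (u, t). auto. }
  apply (Hb (fun i => fst (f i))). split.
  - intros i Hi. destruct (Hf i Hi) as [Hu Ex]. split; auto.
    rewrite <- (vadd_scal_opp_cancel (fst (f i)) (snd (f i)) z), <- Ex.
    apply Madd; [apply Hx; auto|apply Mscal; auto].
  - intros c Hc. apply Hind.
    rewrite (vlin_ext c c x (fun i => vadd V (fst (f i)) (vscal V (snd (f i)) z)) m)
      by (intros i Hi; split; [|apply Hf]; auto).
    rewrite vlin_add_line. eexists _, _. split; [exact Hc|reflexivity].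
Qed.

(* Induction on the length of the family: its last vector is absorbed into W, and also into U
   when it lies outside U. *)
Lemma dim_bound_subadd m : forall v M U W a b,
  subspace V M -> subspace V U -> subspace V W -> (forall x, W x -> U x) ->
  indep_mod V M W v m -> dim_bound V M U a -> dim_bound V (fun x => M x /\ U x) W b ->
  (m <= a + b)%nat.
Proof.
  induction m as [|m IH]; intros v M U W a b HM HU HW HWU Hv Ha Hb; [lia|].
  destruct (indep_mod_last M W v m Hv) as [Mz [Wz Hv']].
  destruct (classic (U (v m))) as [Uz|Uz].
  - destruct (dim_bound_add_line _ W (v m) b HW (conj Mz Uz) Wz Hb) as [Hb1 Hb'].
    enough (m <= a + (b - 1))%nat by lia.
    apply (IH v M U (add_line W (v m))); auto using subspace_add_line.
    destruct HU as [_ [Uadd Uscal]]. intros x [w [t [Hw ->]]]. auto.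
  - destruct (dim_bound_add_line M U (v m) a HU Mz Uz Ha) as [Ha1 Ha'].
    enough (m <= (a - 1) + b)%nat by lia.
    apply (IH v M (add_line U (v m)) (add_line W (v m)));
      auto using subspace_add_line, dim_bound_inter_add_line.
    intros x [w [t [Hw ->]]]. exists w, t. auto.
Qed.

Lemma dim_mod_subadd M U W :
  subspace V M -> subspace V U -> subspace V W -> (forall x, W x -> U x) ->
  ele (dim_mod V M W) (eadd (dim_mod V M U) (dim_mod V (fun x => M x /\ U x) W)).
Proof.
  intros HM HU HW HWU.
  destruct (dim_mod V M U) as [a|] eqn:Ea; [|destruct (dim_mod V M W); exact I].
  destruct (dim_mod V (fun x => M x /\ U x) W) as [b|] eqn:Eb;
    [|destruct (dim_mod V M W); exact I].
  apply dim_mod_le_bound. intros v m Hv.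
  exact (dim_bound_subadd m v M U W a b HM HU HW HWU Hv
           (proj1 (dim_mod_Some V M U a Ea)) (proj1 (dim_mod_Some V _ W b Eb))).
Qed.

End Subadditivity.

Section Invertibility.
Context {V : VSp}.
Variable f : V -> V.
Hypothesis Hf : vlinear V V f.
Context {HV : vspace_laws V}.

Lemma subspace_range : subspace V (range V f).
Proof.
  split; [|split].
  - exists (vzero V). exact (vlinear_0 f Hf).
  - intros x y [a <-] [b <-]. exists (vadd V a b). apply (proj1 Hf).
  - intros c x [a <-]. exists (vscal V c a). apply (proj2 Hf).
Qed.

Lemma subspace_kernel : subspace V (kernel V f).
Proof.
  unfold kernel. split; [|split].
  - exact (vlinear_0 f Hf).
  - intros x y Hx Hy. rewrite (proj1 Hf), Hx, Hy. apply vadd_0_r.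
  - intros c x Hx. rewrite (proj2 Hf), Hx. apply vscal_0_r.
Qed.

Lemma alpha_0_inj : alpha V f = Some 0%nat -> forall x, f x = vzero V -> x = vzero V.
Proof.
  intros Ha x Hx. apply (dim_mod_0_incl V (kernel V f) (zero_sub V) x Ha); auto.
  intros a y ->. apply vscal_0_r.
Qed.

Lemma beta_0_surj : beta V f = Some 0%nat -> forall y, exists x, f x = y.
Proof.
  intros Hb y. apply (dim_mod_0_incl V (full_sub V) (range V f) y Hb); [|exact I].
  apply subspace_range.
Qed.

(* Complements are only required to be closed subspaces, so a linear bijection is invertible
   as soon as {0} is closed; no open mapping theorem is involved. *)
Hypothesis zero_closed : forall u x, (forall m, u m = vzero V) -> vcv V u x -> x = vzero V.

Lemma invertible_iff_bijective : invertible V f <->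
  (forall x, f x = vzero V -> x = vzero V) /\ (forall y, exists x, f x = y).
Proof.
  split; [intros [[Ha _] [Hb _]]; split; auto using alpha_0_inj, beta_0_surj|].
  intros [Hinj Hsurj]. split; split.
  - apply (dim_mod_0 V); [apply subspace_kernel|]. exact Hinj.
  - split; [intros u x _ _; apply Hsurj|].
    exists (zero_sub V). split; [apply subspace_zero|split; [exact zero_closed|split]].
    + intros x _ Hx. exact Hx.
    + intros x. exists x, (vzero V). split; [apply Hsurj|split; [reflexivity|]].
      symmetry. apply vadd_0_r.
  - apply (dim_mod_0 V); [apply subspace_full|]. intros x _. apply Hsurj.
  - exists (full_sub V). split; [apply subspace_full|split; [intros u x _ _; exact I|split]].
    + intros x Hx _. exact (Hinj x Hx).
    + intros x. exists (vzero V), x. split; [exact (vlinear_0 f Hf)|split; [exact I|]].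
      symmetry. apply vadd_0_l.
Qed.

End Invertibility.

Section Shifts.
Context {V : VSp} {HV : vspace_laws V}.
Variable T : V -> V.
Hypothesis HT : vlinear V V T.
Variable l : C.

Lemma lshift_linear : vlinear V V (lshift V T l).
Proof.
  unfold lshift. split.
  - intros x y. rewrite (proj1 HT), vscal_distr_l, !vopp_scal, vscal_distr_l.
    apply vadd_add_swap.
  - intros a x. rewrite (proj2 HT), vscal_distr_l, !vopp_scal, !vscal_assoc.
    f_equal; f_equal; apply injective_projections; simpl; ring.
Qed.

Lemma shift_opp_lshift x : shift V T l x = vscal V (Copp (RtoC 1)) (lshift V T l x).
Proof.
  unfold shift, lshift. rewrite !vopp_scal, vscal_distr_l, !vscal_assoc, vadd_comm.
  f_equal. rewrite <- (vscal_1 (T x)) at 1. f_equal.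
  apply injective_projections; simpl; ring.
Qed.

Lemma alpha_shift : alpha V (shift V T l) = alpha V (lshift V T l).
Proof.
  unfold alpha. f_equal. apply functional_extensionality; intro x.
  apply propositional_extensionality. unfold kernel. rewrite shift_opp_lshift. split.
  - apply vscal_eq_0. intro E. injection E; lra.
  - intros ->. apply vscal_0_r.
Qed.

Lemma beta_shift : beta V (shift V T l) = beta V (lshift V T l).
Proof.
  unfold beta. f_equal. apply functional_extensionality; intro y.
  apply propositional_extensionality. unfold range.
  split; intros [x <-]; exists (vscal V (Copp (RtoC 1)) x).
  - rewrite (proj2 lshift_linear). symmetry. apply shift_opp_lshift.
  - rewrite shift_opp_lshift, (proj2 lshift_linear), vscal_assoc.
    rewrite <- (vscal_1 (lshift V T l x)) at 2. f_equal.
    apply injective_projections; simpl; ring.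
Qed.

End Shifts.

Section BanachSpaces.
Variable Y : CompleteNormedModule C_AbsRing.

Lemma is_linear_vlinear (f : Y -> Y) : is_linear f -> vlinear (VSp_of Y) (VSp_of Y) f.
Proof. intro H. split; intros; simpl; [apply (linear_plus f H)|apply (linear_scal f H)]. Qed.

Lemma VSp_of_zero_closed (u : nat -> Y) (x : Y) :
  (forall m, u m = zero) -> vcv (VSp_of Y) u x -> x = zero.
Proof.
  simpl. intros Hu Hcv.
  apply (@norm_eq_zero C_AbsRing (CompleteNormedModule.NormedModule C_AbsRing Y)).
  apply Rle_antisym; [|apply norm_ge_0]. apply Rnot_lt_le; intro Hlt.
  destruct (Hcv (norm x) Hlt) as [N HN]. specialize (HN N (le_n N)).
  rewrite Hu in HN. unfold minus in HN. rewrite plus_zero_l in HN.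
  rewrite (@norm_opp C_AbsRing (CompleteNormedModule.NormedModule C_AbsRing Y)) in HN. lra.
Qed.

Lemma minus_zero_r_cnm (x : Y) : minus x zero = x.
Proof. exact (@minus_zero_r (CompleteNormedModule.AbelianGroup C_AbsRing Y) x). Qed.

Lemma minus_plus_cancel_r (x y : Y) : minus (plus x y) y = x.
Proof.
  unfold minus. rewrite <- plus_assoc.
  rewrite (@plus_opp_r (CompleteNormedModule.AbelianGroup C_AbsRing Y)). apply plus_zero_r.
Qed.

Lemma gsum_len_ext (f g : nat -> Y) a len :
  (forall j, (a <= j < a + len)%nat -> f j = g j) -> gsum_len f a len = gsum_len g a len.
Proof.
  revert a. induction len as [|len IH]; intros a H; simpl; auto.
  rewrite (H a) by lia. rewrite (IH (S a)); auto. intros; apply H; lia.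
Qed.

Lemma gsum_len_plus (f g : nat -> Y) a len :
  gsum_len (fun j => plus (f j) (g j)) a len = plus (gsum_len f a len) (gsum_len g a len).
Proof.
  revert a. induction len as [|len IH]; intros a; simpl.
  - symmetry; apply plus_zero_r.
  - rewrite IH, <- !plus_assoc. f_equal. rewrite !plus_assoc. f_equal. apply plus_comm.
Qed.

Lemma gsum_len_scal (f : nat -> Y) (c : C) a len :
  gsum_len (fun j => scal c (f j)) a len = scal c (gsum_len f a len).
Proof.
  revert a. induction len as [|len IH]; intros a; simpl.
  - symmetry; exact (@scal_zero_r C_AbsRing _ c).
  - rewrite IH. symmetry. exact (@scal_distr_l C_AbsRing _ c _ _).
Qed.

End BanachSpaces.

Lemma DS_space_zero_closed n X (u : nat -> DS n X) (p : DS n X) :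
  (forall m, u m = vzero (DS_space n X)) -> vcv (DS_space n X) u p -> p = vzero (DS_space n X).
Proof.
  intros Hu Hcv. apply functional_extensionality_dep. intro i.
  apply (VSp_of_zero_closed _ (fun m => u m i)); [|apply Hcv].
  intro m. rewrite Hu. reflexivity.
Qed.

Section Triangular.
Variable n : nat.
Variable X : nat -> CompleteNormedModule C_AbsRing.
Variable D : forall k, X k -> X k.
Variable A : forall i j, X j -> X i.
Variable l : C.
Hypothesis HD : forall k, (1 <= k <= n)%nat -> is_linear (D k).
Hypothesis HA : forall i j, (1 <= i)%nat -> (i < j)%nat -> (j <= n)%nat -> is_linear (A i j).

Notation DSV := (DS_space n X).
Notation comp := (Defs.comp n X).

Definition Dl k : X k -> X k := lshift (VSp_of (X k)) (D k) l.
Definition Tl : DS n X -> DS n X := lshift DSV (Tmat n X D A) l.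
Definition offdiag i (p : DS n X) : X i := gsum (fun j => A i j (comp p j)) (S i) n.

Lemma comp_Idx (p : DS n X) i (Hi : (1 <= i <= n)%nat) : comp p i = p (exist _ i Hi).
Proof.
  unfold Defs.comp. destruct (le_dec 1 i) as [a|]; [|lia]. destruct (le_dec i n) as [b|]; [|lia].
  replace (conj a b) with Hi by apply proof_irrelevance. reflexivity.
Qed.

Lemma comp_out (p : DS n X) j : ~ (1 <= j <= n)%nat -> comp p j = zero.
Proof. intro H. unfold Defs.comp. destruct (le_dec 1 j), (le_dec j n); auto. lia. Qed.

Lemma DS_ext (p q : DS n X) : (forall j, (1 <= j <= n)%nat -> comp p j = comp q j) -> p = q.
Proof.
  intro H. apply functional_extensionality_dep. intros [i Hi].
  rewrite <- !(comp_Idx _ i Hi). auto.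
Qed.

Lemma comp_linear j : vlinear DSV (VSp_of (X j)) (fun p => comp p j).
Proof.
  unfold Defs.comp. split; intros; destruct (le_dec 1 j), (le_dec j n); simpl; auto.
  all: symmetry; first [apply plus_zero_r | exact (@scal_zero_r C_AbsRing _ _)].
Qed.

Lemma comp_vadd p q j : comp (vadd DSV p q) j = plus (comp p j) (comp q j).
Proof. apply comp_linear. Qed.

Lemma comp_vscal a p j : comp (vscal DSV a p) j = scal a (comp p j).
Proof. apply comp_linear. Qed.

Lemma comp_vzero j : comp (vzero DSV) j = zero.
Proof. exact (vlinear_0 _ (comp_linear j)). Qed.

Lemma comp_vlin c v m j : comp (vlin DSV c v m) j = vlin (VSp_of (X j)) c (fun i => comp (v i) j) m.
Proof. exact (vlinear_vlin _ (comp_linear j) c v m). Qed.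

Lemma offdiag_ext i p q : (forall j, (i < j)%nat -> comp p j = comp q j) ->
  offdiag i p = offdiag i q.
Proof. intro H. apply gsum_len_ext. intros j Hj. rewrite H; auto. lia. Qed.

Lemma offdiag_linear i : (1 <= i)%nat -> vlinear DSV (VSp_of (X i)) (offdiag i).
Proof.
  intro Hi. split.
  - intros p q. change (offdiag i (vadd DSV p q) = plus (offdiag i p) (offdiag i q)).
    unfold offdiag, gsum. rewrite <- gsum_len_plus. apply gsum_len_ext.
    intros j Hj. rewrite comp_vadd. apply (linear_plus (A i j)), HA; lia.
  - intros a p. change (offdiag i (vscal DSV a p) = scal a (offdiag i p)).
    unfold offdiag, gsum. rewrite <- gsum_len_scal. apply gsum_len_ext.
    intros j Hj. rewrite comp_vscal. apply (linear_scal (A i j)), HA; lia.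
Qed.

Lemma offdiag_0 i p : (1 <= i)%nat -> (forall j, (i < j)%nat -> comp p j = zero) ->
  offdiag i p = zero.
Proof.
  intros Hi H. rewrite (offdiag_ext i p (vzero DSV)).
  - exact (vlinear_0 _ (offdiag_linear i Hi)).
  - intros j Hj. rewrite H, comp_vzero; auto.
Qed.

Lemma Dl_linear k : (1 <= k <= n)%nat -> vlinear (VSp_of (X k)) (VSp_of (X k)) (Dl k).
Proof. intro Hk. apply lshift_linear, is_linear_vlinear, HD, Hk. Qed.

Lemma Tmat_linear : vlinear DSV DSV (Tmat n X D A).
Proof.
  split.
  - intros p q. apply functional_extensionality_dep. intros [j Hj].
    change (plus (D j (plus (p (exist _ j Hj)) (q (exist _ j Hj)))) (offdiag j (vadd DSV p q)) =
            plus (plus (D j (p (exist _ j Hj))) (offdiag j p))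
                 (plus (D j (q (exist _ j Hj))) (offdiag j q))).
    rewrite (linear_plus (D j) (HD j Hj)), (proj1 (offdiag_linear j ltac:(lia))).
    exact (vadd_add_swap (V := VSp_of (X j)) _ _ _ _).
  - intros a p. apply functional_extensionality_dep. intros [j Hj].
    change (plus (D j (scal a (p (exist _ j Hj)))) (offdiag j (vscal DSV a p)) =
            scal a (plus (D j (p (exist _ j Hj))) (offdiag j p))).
    rewrite (linear_scal (D j) (HD j Hj)), (proj2 (offdiag_linear j ltac:(lia))).
    symmetry. exact (@scal_distr_l C_AbsRing _ a _ _).
Qed.

Lemma Tl_linear : vlinear DSV DSV Tl.
Proof. apply lshift_linear, Tmat_linear. Qed.

Lemma comp_Tl p i : (1 <= i <= n)%nat -> comp (Tl p) i = minus (Dl i (comp p i)) (offdiag i p).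
Proof.
  intro Hi. rewrite !(comp_Idx _ i Hi).
  set (x := p (exist _ i Hi)).
  change (plus (scal l x) (opp (plus (D i x) (offdiag i p))) =
          plus (plus (scal l x) (opp (D i x))) (opp (offdiag i p))).
  rewrite (@opp_plus (CompleteNormedModule.AbelianGroup C_AbsRing (X i))). apply plus_assoc.
Qed.

Lemma Tl_local p q i : (forall j, (i <= j)%nat -> comp p j = comp q j) ->
  comp (Tl p) i = comp (Tl q) i.
Proof.
  intro H. destruct (le_dec 1 i), (le_dec i n); [|rewrite !comp_out by lia; auto..].
  rewrite !comp_Tl, H, (offdiag_ext i p q) by (auto; intros; apply H; lia). reflexivity.
Qed.

Lemma Tl_local_0 p i : (forall j, (i <= j)%nat -> comp p j = zero) -> comp (Tl p) i = zero.
Proof.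
  intro H. rewrite (Tl_local p (vzero DSV)), (vlinear_0 _ Tl_linear); [apply comp_vzero|].
  intros. rewrite H, comp_vzero; auto.
Qed.

Definition single k (x : X k) : DS n X :=
  fun i => match Nat.eq_dec k (proj1_sig i) with
           | left e => eq_rect k X x _ e
           | right _ => zero end.

Lemma comp_single_eq k x : (1 <= k <= n)%nat -> comp (single k x) k = x.
Proof.
  intro Hk. rewrite (comp_Idx _ k Hk). unfold single. simpl.
  destruct (Nat.eq_dec k k) as [e|]; [|lia].
  rewrite (Eqdep_dec.UIP_refl_nat _ e). reflexivity.
Qed.

Lemma comp_single_neq k x j : j <> k -> comp (single k x) j = zero.
Proof.
  intro Hjk. destruct (le_dec 1 j) as [H1|], (le_dec j n) as [H2|];
    [|rewrite comp_out by lia; auto..].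
  rewrite (comp_Idx _ j (conj H1 H2)). unfold single. simpl.
  destruct (Nat.eq_dec k j); [lia|auto].
Qed.

Lemma single_linear k : (1 <= k <= n)%nat -> vlinear (VSp_of (X k)) DSV (single k).
Proof.
  intro Hk. split.
  - intros x y. apply DS_ext. intros j Hj. rewrite comp_vadd.
    destruct (Nat.eq_dec j k) as [->|]; [rewrite !comp_single_eq; auto|].
    rewrite !comp_single_neq; auto. symmetry. apply plus_zero_r.
  - intros a x. apply DS_ext. intros j Hj. rewrite comp_vscal.
    destruct (Nat.eq_dec j k) as [->|]; [rewrite !comp_single_eq; auto|].
    rewrite !comp_single_neq; auto. symmetry. exact (@scal_zero_r C_AbsRing _ _).
Qed.

Lemma Tl_single_diag k x : (1 <= k <= n)%nat -> comp (Tl (single k x)) k = Dl k x.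
Proof.
  intro Hk.
  rewrite comp_Tl, comp_single_eq, offdiag_0
    by (auto; try lia; intros; apply comp_single_neq; lia).
  apply minus_zero_r_cnm.
Qed.

Lemma Tl_single_below k x i : (k < i)%nat -> comp (Tl (single k x)) i = zero.
Proof. intro Hi. apply Tl_local_0. intros. apply comp_single_neq. lia. Qed.

Definition drop_upto k (p : DS n X) : DS n X :=
  fun i => if le_lt_dec (proj1_sig i) k then zero else p i.

Lemma comp_drop_upto_le k p j : (j <= k)%nat -> comp (drop_upto k p) j = zero.
Proof.
  intro H. destruct (le_dec 1 j) as [H1|], (le_dec j n) as [H2|];
    [|rewrite comp_out by lia; auto..].
  rewrite (comp_Idx _ j (conj H1 H2)). unfold drop_upto. simpl.
  destruct (le_lt_dec j k); [auto|lia].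
Qed.

Lemma comp_drop_upto_gt k p j : (k < j)%nat -> comp (drop_upto k p) j = comp p j.
Proof.
  intro H. destruct (le_dec 1 j) as [H1|], (le_dec j n) as [H2|];
    [|rewrite !comp_out by lia; auto..].
  rewrite !(comp_Idx _ j (conj H1 H2)). unfold drop_upto. simpl.
  destruct (le_lt_dec j k); [lia|auto].
Qed.

Lemma drop_upto_linear k : vlinear DSV DSV (drop_upto k).
Proof.
  split.
  - intros x y. apply DS_ext. intros j Hj. rewrite comp_vadd.
    destruct (le_lt_dec j k); [|rewrite !comp_drop_upto_gt, comp_vadd; auto].
    rewrite !comp_drop_upto_le; auto. symmetry. apply plus_zero_r.
  - intros a x. apply DS_ext. intros j Hj. rewrite comp_vscal.
    destruct (le_lt_dec j k); [|rewrite !comp_drop_upto_gt, comp_vscal; auto].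
    rewrite !comp_drop_upto_le; auto. symmetry. exact (@scal_zero_r C_AbsRing _ _).
Qed.

Definition alphaDl k : enat := alpha (VSp_of (X k)) (Dl k).
Definition betaDl k : enat := beta (VSp_of (X k)) (Dl k).

Definition ker_tail j (p : DS n X) : Prop :=
  (forall i, (i < j)%nat -> comp p i = zero) /\ (forall i, (j <= i)%nat -> comp (Tl p) i = zero).

Definition supp_upto j (p : DS n X) : Prop := forall i, (j < i)%nat -> comp p i = zero.

Lemma subspace_ker_tail j : subspace DSV (ker_tail j).
Proof.
  split; [|split].
  - split; intros; [|rewrite (vlinear_0 _ Tl_linear)]; apply comp_vzero.
  - intros x y [Hx1 Hx2] [Hy1 Hy2].
    split; intros i Hi; rewrite ?(proj1 Tl_linear), comp_vadd, ?Hx1, ?Hy1, ?Hx2, ?Hy2 by auto;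
      apply plus_zero_r.
  - intros a x [Hx1 Hx2].
    split; intros i Hi; rewrite ?(proj2 Tl_linear), comp_vscal, ?Hx1, ?Hx2 by auto;
      exact (@scal_zero_r C_AbsRing _ a).
Qed.

Lemma subspace_supp_upto j : subspace DSV (supp_upto j).
Proof.
  split; [|split].
  - intros i _. apply comp_vzero.
  - intros x y Hx Hy i Hi. rewrite comp_vadd, Hx, Hy by auto. apply plus_zero_r.
  - intros a x Hx i Hi. rewrite comp_vscal, Hx by auto. exact (@scal_zero_r C_AbsRing _ a).
Qed.

Lemma dim_ker_tail_mod_supp_le j :
  ele (dim_mod DSV (ker_tail j) (supp_upto j)) (dim_mod DSV (ker_tail (S j)) (zero_sub DSV)).
Proof.
  apply dim_mod_le_transfer. intros v m [Hv Hind].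
  exists (fun i => drop_upto j (v i)). split.
  - intros i Hi. split.
    + intros i' Hi'. apply comp_drop_upto_le. lia.
    + intros i' Hi'. rewrite (Tl_local _ (v i)); [apply (Hv i Hi); lia|].
      intros j' Hj'. apply comp_drop_upto_gt. lia.
  - intros c Hc. apply Hind. unfold zero_sub in Hc.
    rewrite <- (vlinear_vlin _ (drop_upto_linear j)) in Hc.
    intros i Hi. rewrite <- (comp_drop_upto_gt j), Hc by auto. apply comp_vzero.
Qed.

Lemma dim_ker_tail_supp_le j : (1 <= j <= n)%nat ->
  ele (dim_mod DSV (fun p => ker_tail j p /\ supp_upto j p) (zero_sub DSV)) (alphaDl j).
Proof.
  intro Hj. apply dim_mod_le_transfer. intros v m [Hv Hind].
  exists (fun i => comp (v i) j). split.
  - intros i Hi. destruct (Hv i Hi) as [[_ HT] Hsupp]. unfold kernel.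
    specialize (HT j (le_n j)).
    rewrite comp_Tl, offdiag_0, minus_zero_r_cnm in HT by first [lia | exact Hsupp].
    exact HT.
  - intros c Hc. apply Hind. unfold zero_sub in Hc |- *.
    destruct (subspace_vlin _ c v m
                (subspace_inter _ _ (subspace_ker_tail j) (subspace_supp_upto j)) Hv)
      as [[Hlow _] Hhigh].
    apply DS_ext. intros i Hi. rewrite comp_vzero.
    destruct (lt_eq_lt_dec i j) as [[|<-]|]; auto. rewrite comp_vlin. exact Hc.
Qed.

Lemma dim_ker_tail_le j : (1 <= j <= S n)%nat ->
  ele (dim_mod DSV (ker_tail j) (zero_sub DSV)) (esum alphaDl j n).
Proof.
  remember (S n - j)%nat as t eqn:Ht. revert j Ht.
  induction t as [|t IH]; intros j Ht Hj.
  - replace j with (S n) by lia. rewrite esum_empty, (dim_mod_0 DSV); simpl; auto.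
    + apply subspace_ker_tail.
    + intros p [Hp _]. apply DS_ext. intros i Hi. rewrite Hp, comp_vzero; auto. lia.
  - rewrite esum_cons by lia.
    eapply ele_trans.
    { apply (dim_mod_subadd (V := DSV) (ker_tail j) (supp_upto j) (zero_sub DSV));
        [apply subspace_ker_tail|apply subspace_supp_upto|apply subspace_zero|].
      intros x -> i _. apply comp_vzero. }
    rewrite eadd_comm. apply eadd_le_compat.
    + apply dim_ker_tail_supp_le. lia.
    + eapply ele_trans; [apply dim_ker_tail_mod_supp_le|]. apply IH; lia.
Qed.

Lemma beta_le_dim_ker_tail k : (forall q, exists p, Tl p = q) -> (1 <= k <= n)%nat ->
  ele (betaDl k) (dim_mod DSV (ker_tail (S k)) (zero_sub DSV)).
Proof.
  intros Hsurj Hk. apply dim_mod_le_transfer. intros u m [_ Hind].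
  destruct (ClassicalEpsilon.choice (fun i p => Tl p = single k (u i)) (fun i => Hsurj _))
    as [P HP].
  exists (fun i => drop_upto k (P i)). split.
  - intros i Hi. split.
    + intros i' Hi'. apply comp_drop_upto_le. lia.
    + intros i' Hi'. rewrite (Tl_local _ (P i)), HP by (intros; apply comp_drop_upto_gt; lia).
      apply comp_single_neq. lia.
  - intros c Hc. apply Hind. unfold zero_sub in Hc.
    rewrite <- (vlinear_vlin _ (drop_upto_linear k)) in Hc.
    set (Q := vlin DSV c P m) in *.
    exists (comp Q k).
    assert (HQ := comp_Tl Q k Hk).
    rewrite (offdiag_ext k Q (drop_upto k Q)), Hc, offdiag_0, minus_zero_r_cnm in HQ
      by (try lia; intros; rewrite ?comp_drop_upto_gt, ?comp_vzero; auto).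
    rewrite <- HQ. unfold Q. rewrite (vlinear_vlin _ Tl_linear), comp_vlin.
    apply vlin_ext. intros i Hi. rewrite HP. split; [|apply comp_single_eq]; auto.
Qed.

Definition head_range j (q : DS n X) : Prop := exists p, supp_upto j p /\
  forall i, (1 <= i <= j)%nat -> comp (Tl p) i = comp q i.

Definition diag_range j (q : DS n X) : Prop := range (VSp_of (X j)) (Dl j) (comp q j).

Lemma subspace_head_range j : subspace DSV (head_range j).
Proof.
  split; [|split].
  - exists (vzero DSV). split; [apply subspace_supp_upto|].
    intros. rewrite (vlinear_0 _ Tl_linear). reflexivity.
  - intros x y [p [Hp1 Hp2]] [q [Hq1 Hq2]]. exists (vadd DSV p q).
    split; [apply subspace_supp_upto; auto|].
    intros i Hi. rewrite (proj1 Tl_linear), !comp_vadd, Hp2, Hq2; auto.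
  - intros a x [p [Hp1 Hp2]]. exists (vscal DSV a p).
    split; [apply subspace_supp_upto; auto|].
    intros i Hi. rewrite (proj2 Tl_linear), !comp_vscal, Hp2; auto.
Qed.

Lemma subspace_diag_range j : (1 <= j <= n)%nat -> subspace DSV (diag_range j).
Proof.
  intro Hj. apply (subspace_preimage _ (comp_linear j)).
  exact (subspace_range _ (Dl_linear j Hj)).
Qed.

Lemma head_range_diag_range j q : (j < n)%nat -> head_range (S j) q -> diag_range (S j) q.
Proof.
  intros Hj [p [Hsupp HT]]. exists (comp p (S j)).
  rewrite <- HT, comp_Tl, offdiag_0, minus_zero_r_cnm by (auto; lia). reflexivity.
Qed.

Lemma dim_full_mod_diag_range_le j :
  ele (dim_mod DSV (full_sub DSV) (diag_range j)) (betaDl j).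
Proof.
  apply dim_mod_le_transfer. intros v m [_ Hind].
  exists (fun i => comp (v i) j). split; [intros; exact I|].
  intros c [x Hx]. apply Hind. exists x. rewrite Hx, comp_vlin. reflexivity.
Qed.

Lemma dim_diag_range_mod_head_range_le j : (j < n)%nat ->
  ele (dim_mod DSV (fun q => full_sub DSV q /\ diag_range (S j) q) (head_range (S j)))
      (dim_mod DSV (full_sub DSV) (head_range j)).
Proof.
  intro Hj. apply dim_mod_le_transfer. intros v m [Hv Hind].
  destruct (choice_below zero (fun i x => Dl (S j) x = comp (v i) (S j)) m) as [xs Hxs].
  { intros i Hi. exact (proj2 (Hv i Hi)). }
  set (TS := fun x : X (S j) => Tl (single (S j) x)).
  assert (HTS : vlinear (VSp_of (X (S j))) DSV TS)
    by (apply (vlinear_comp _ DSV); [apply single_linear; lia|apply Tl_linear]).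
  exists (fun i => vadd DSV (v i) (vscal DSV (Copp (RtoC 1)) (TS (xs i)))).
  split; [intros; exact I|].
  intros c [p [Hsupp HT]]. apply Hind.
  set (Xs := vlin (VSp_of (X (S j))) c xs m).
  rewrite vlin_vadd, vlin_vscal, <- (vlinear_vlin _ HTS) in HT. fold Xs in HT.
  exists (vadd DSV p (single (S j) Xs)). split.
  - intros i Hi. rewrite comp_vadd, Hsupp, comp_single_neq by lia. apply plus_zero_r.
  - intros i Hi. rewrite (proj1 Tl_linear), comp_vadd.
    destruct (Nat.eq_dec i (S j)) as [->|Hne].
    + rewrite (Tl_local_0 p), Tl_single_diag, plus_zero_l by (auto; lia).
      unfold Xs. rewrite (vlinear_vlin _ (Dl_linear (S j) ltac:(lia))), comp_vlin.
      apply (vlin_ext (V := VSp_of (X (S j)))). intros i' Hi'. auto.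
    + rewrite HT, comp_vadd, comp_vscal by lia.
      exact (vadd_opp_scal_cancel (V := VSp_of (X i)) _ _).
Qed.

Lemma codim_head_range_le j : (j <= n)%nat ->
  ele (dim_mod DSV (full_sub DSV) (head_range j)) (esum betaDl 1 j).
Proof.
  induction j as [|j IH]; intro Hj.
  - rewrite (dim_mod_0 DSV); [cbn; lia|apply subspace_full|].
    intros q _. exists (vzero DSV). split; [apply subspace_supp_upto|]. intros; lia.
  - rewrite esum_snoc by lia.
    eapply ele_trans.
    { apply (dim_mod_subadd (V := DSV) (full_sub DSV) (diag_range (S j)) (head_range (S j)));
        auto using subspace_full, subspace_diag_range, subspace_head_range, head_range_diag_range.
      apply subspace_diag_range. lia. }
    rewrite eadd_comm. apply eadd_le_compat; [|apply dim_full_mod_diag_range_le].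
    eapply ele_trans; [apply dim_diag_range_mod_head_range_le; lia|]. apply IH. lia.
Qed.

Lemma alpha_le_codim_head_range k : (forall p, Tl p = vzero DSV -> p = vzero DSV) ->
  (1 <= k <= n)%nat -> ele (alphaDl k) (dim_mod DSV (full_sub DSV) (head_range (k - 1))).
Proof.
  intros Hinj Hk. apply dim_mod_le_transfer. intros x m [Hx Hind].
  set (TS := fun y : X k => Tl (single k y)).
  assert (HTS : vlinear (VSp_of (X k)) DSV TS)
    by (apply (vlinear_comp _ DSV); [apply single_linear, Hk|apply Tl_linear]).
  exists (fun i => TS (x i)). split; [intros; exact I|].
  intros c [p [Hsupp HT]]. apply Hind. unfold zero_sub.
  rewrite <- (vlinear_vlin _ HTS) in HT.
  set (Xs := vlin (VSp_of (X k)) c x m) in *.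
  assert (HXs : Dl k Xs = zero).
  { apply (subspace_vlin (V := VSp_of (X k)) (kernel (VSp_of (X k)) (Dl k))); auto.
    exact (subspace_kernel _ (Dl_linear k Hk)). }
  assert (Hp : single k Xs = p).
  { apply (vlinear_inj (V := DSV) (W := DSV) Tl Tl_linear Hinj). apply DS_ext. intros j Hj.
    destruct (le_lt_dec j (k - 1)); [symmetry; apply HT; lia|].
    rewrite (Tl_local_0 p) by (intros; apply Hsupp; lia).
    destruct (Nat.eq_dec j k) as [->|]; [rewrite Tl_single_diag; auto|].
    apply Tl_single_below. lia. }
  rewrite <- (comp_single_eq k Xs Hk), Hp. apply Hsupp. lia.
Qed.

Lemma Dl_1_inj : (forall p, Tl p = vzero DSV -> p = vzero DSV) -> (1 <= n)%nat ->
  forall x, Dl 1 x = zero -> x = zero.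
Proof.
  intros Hinj Hn x Hx.
  assert (H : single 1 x = vzero DSV).
  { apply Hinj, DS_ext. intros j Hj. rewrite comp_vzero.
    destruct (Nat.eq_dec j 1) as [->|]; [rewrite Tl_single_diag; auto|].
    apply Tl_single_below. lia. }
  rewrite <- (comp_single_eq 1 x), H by lia. apply comp_vzero.
Qed.

Lemma Dl_n_surj : (forall q, exists p, Tl p = q) -> (1 <= n)%nat ->
  forall y, exists x, Dl n x = y.
Proof.
  intros Hsurj Hn y. destruct (Hsurj (single n y)) as [p Hp]. exists (comp p n).
  assert (H := comp_Tl p n ltac:(lia)).
  rewrite offdiag_0, minus_zero_r_cnm, Hp, comp_single_eq in H
    by (try lia; intros; apply comp_out; lia).
  symmetry. exact H.
Qed.

(* Back substitution, from the last coordinate up. *)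
Lemma Tl_inj : (forall k, (1 <= k <= n)%nat -> forall x, Dl k x = zero -> x = zero) ->
  forall p, Tl p = vzero DSV -> p = vzero DSV.
Proof.
  intros Hker p Hp.
  assert (H : forall t i, (n - t < i)%nat -> comp p i = zero).
  { induction t as [|t IH]; intros i Hi; [apply comp_out; lia|].
    destruct (le_lt_dec i (n - t)); [|apply IH; lia].
    destruct (le_dec 1 i); [|apply comp_out; lia].
    replace i with (n - t)%nat in * by lia.
    apply (Hker (n - t)%nat); [lia|].
    assert (E := comp_Tl p (n - t) ltac:(lia)).
    rewrite Hp, comp_vzero, offdiag_0, minus_zero_r_cnm in E by (auto; intros; apply IH; lia).
    auto. }
  apply DS_ext. intros j Hj. rewrite comp_vzero. apply (H n). lia.
Qed.

Lemma Tl_surj : (forall k, (1 <= k <= n)%nat -> forall y, exists x, Dl k x = y) ->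
  forall q, exists p, Tl p = q.
Proof.
  intros Hsurj q.
  assert (H : forall t, exists p, forall i, (n - t < i)%nat -> comp (Tl p) i = comp q i).
  { induction t as [|t [p Hp]].
    - exists (vzero DSV). intros i Hi. rewrite !comp_out by lia. reflexivity.
    - destruct (le_lt_dec n t); [exists p; intros; apply Hp; lia|].
      set (k := (n - t)%nat).
      destruct (Hsurj k ltac:(lia) (plus (comp q k) (offdiag k p))) as [x Hx].
      exists (vadd DSV (drop_upto k p) (single k x)). intros i Hi.
      destruct (Nat.eq_dec i k) as [->|].
      + rewrite comp_Tl, comp_vadd, comp_drop_upto_le, comp_single_eq, plus_zero_l by lia.
        rewrite (offdiag_ext k _ p), Hx by (intros; rewrite comp_vadd, comp_drop_upto_gt,
          comp_single_neq, plus_zero_r by lia; reflexivity).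
        apply minus_plus_cancel_r.
      + rewrite <- Hp by lia. apply Tl_local. intros j Hj.
        rewrite comp_vadd, comp_drop_upto_gt, comp_single_neq, plus_zero_r by lia.
        reflexivity. }
  destruct (H n) as [p Hp]. exists p. apply DS_ext. intros j Hj. apply Hp. lia.
Qed.

Lemma alphaD_Dl k : alphaD X D l k = alphaDl k.
Proof. apply alpha_shift. Qed.

Lemma betaD_Dl k : (1 <= k <= n)%nat -> betaD X D l k = betaDl k.
Proof. intro Hk. apply beta_shift, is_linear_vlinear, HD, Hk. Qed.

Lemma Dl_invertible_iff k : (1 <= k <= n)%nat -> invertible (VSp_of (X k)) (Dl k) <->
  (forall x, Dl k x = zero -> x = zero) /\ (forall y, exists x, Dl k x = y).
Proof.
  intro Hk. exact (invertible_iff_bijective _ (Dl_linear k Hk) (VSp_of_zero_closed (X k))).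
Qed.

Lemma Tl_invertible_iff : invertible DSV Tl <->
  (forall p, Tl p = vzero DSV -> p = vzero DSV) /\ (forall q, exists p, Tl p = q).
Proof.
  exact (invertible_iff_bijective _ Tl_linear (DS_space_zero_closed n X)).
Qed.

Lemma Delta_of_not_surj k : (forall q, exists p, Tl p = q) -> (1 <= k <= n)%nat ->
  ~ (forall y, exists x, Dl k x = y) -> Delta_exc n X D l.
Proof.
  intros Hsurj Hk Hnsurj.
  assert (Hkn : k <> n) by (intros ->; exact (Hnsurj (Dl_n_surj Hsurj ltac:(lia)))).
  assert (Hle : ele (betaD X D l k) (esum (alphaD X D l) (S k) n)).
  { rewrite betaD_Dl, (esum_ext _ alphaDl) by (auto; intros; apply alphaD_Dl).
    eapply ele_trans; [apply beta_le_dim_ker_tail; auto|]. apply dim_ker_tail_le. lia. }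
  assert (Hbeta : betaD X D l k <> Some 0%nat).
  { rewrite betaD_Dl by exact Hk. intro H0.
    exact (Hnsurj (beta_0_surj (V := VSp_of (X k)) _ (Dl_linear k Hk) H0)). }
  destruct (Nat.eq_dec k 1) as [->|Hk1]; [right; left; auto|].
  left. exists k. split; [lia|]. left. split; [|exact Hle].
  intros [H0 _]. apply Hbeta. rewrite betaD_Dl; auto.
Qed.

Lemma Delta_of_not_inj k : (forall p, Tl p = vzero DSV -> p = vzero DSV) -> (1 <= k <= n)%nat ->
  ~ (forall x, Dl k x = zero -> x = zero) -> Delta_exc n X D l.
Proof.
  intros Hinj Hk Hninj.
  assert (Hk1 : k <> 1%nat) by (intros ->; exact (Hninj (Dl_1_inj Hinj ltac:(lia)))).
  assert (Hle : ele (alphaD X D l k) (esum (betaD X D l) 1 (k - 1))).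
  { rewrite alphaD_Dl, (esum_ext _ betaDl) by (intros; apply betaD_Dl; lia).
    eapply ele_trans; [apply alpha_le_codim_head_range; auto|]. apply codim_head_range_le. lia. }
  assert (Halpha : alphaD X D l k <> Some 0%nat).
  { rewrite alphaD_Dl. intro H0.
    exact (Hninj (alpha_0_inj (V := VSp_of (X k)) _ H0)). }
  destruct (Nat.eq_dec k n) as [->|Hkn]; [right; right; auto|].
  left. exists k. split; [lia|]. right. split; [|exact Hle].
  intros [H0 _]. apply Halpha. rewrite alphaD_Dl. exact H0.
Qed.

Lemma spec_Dl_iff : (2 <= n)%nat ->
  (exists k, (1 <= k <= n)%nat /\ spec (VSp_of (X k)) (D k) l) <->
  spec DSV (Tmat n X D A) l \/ Delta_exc n X D l.
Proof.
  intro Hn. split.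
  - intros [k [Hk Hspec]].
    destruct (classic (invertible DSV Tl)) as [HT|HT]; [right|left; exact HT].
    destruct (proj1 Tl_invertible_iff HT) as [Hinj Hsurj].
    destruct (classic (forall y, exists x, Dl k x = y)) as [Hk_surj|Hk_nsurj];
      [|exact (Delta_of_not_surj k Hsurj Hk Hk_nsurj)].
    apply (Delta_of_not_inj k Hinj Hk). intro Hk_inj.
    exact (Hspec (proj2 (Dl_invertible_iff k Hk) (conj Hk_inj Hk_surj))).
  - intros [HT|[[k [Hk [[Hr _]|[Hl _]]]]|[[Hb _]|[Ha _]]]].
    + apply NNPP. intro Hall. apply HT, Tl_invertible_iff.
      assert (HDl : forall k, (1 <= k <= n)%nat -> invertible (VSp_of (X k)) (Dl k))
        by (intros k Hk; apply NNPP; intro; apply Hall; eauto).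
      split; [apply Tl_inj|apply Tl_surj]; intros k Hk; apply (Dl_invertible_iff k Hk), HDl, Hk.
    + exists k. split; [lia|]. intros [_ HR]. exact (Hr HR).
    + exists k. split; [lia|]. intros [HL _]. exact (Hl HL).
    + exists 1%nat. split; [lia|]. intros [_ [Hb0 _]]. apply Hb.
      rewrite betaD_Dl by lia. exact Hb0.
    + exists n. split; [lia|]. intros [[Ha0 _] _]. apply Ha.
      rewrite alphaD_Dl. exact Ha0.
Qed.

End Triangular.

Theorem mainTheorem15 :
  forall (n : nat) (X : nat -> CompleteNormedModule C_AbsRing)
         (D : forall k, X k -> X k),
  (2 <= n)%nat ->
  (forall k, (1 <= k <= n)%nat -> is_hilbert (X k) /\ inf_dim (X k)) ->
  (forall k, (1 <= k <= n)%nat -> is_linear (D k)) ->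
  forall A : forall i j, X j -> X i,
  (forall i j, (1 <= i)%nat -> (i < j)%nat -> (j <= n)%nat -> is_linear (A i j)) ->
  (forall l : C,
     (exists k, (1 <= k <= n)%nat /\ spec (VSp_of (X k)) (D k) l) <->
     (spec (DS_space n X) (Tmat n X D A) l \/ Delta_exc n X D l)) /\
  ((forall l : C, ~ Delta_exc n X D l) ->
   forall l : C,
     (exists k, (1 <= k <= n)%nat /\ spec (VSp_of (X k)) (D k) l) <->
     spec (DS_space n X) (Tmat n X D A) l).
Proof.
  intros n X D Hn _ HD A HA.
  assert (Hspec := fun l => spec_Dl_iff n X D A l HD HA Hn).
  split; [exact Hspec|].
  intros Hno l. rewrite Hspec. specialize (Hno l). tauto.
Qed.
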